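(* Let $H : \mathcal E(2) \rightarrow \mathcal E(4)$ be a chain homotopy between $(23) \circ F$ and $G$ (i.e. $\partial\circ H + H\circ\partial = (23)\circ F + G$) satisfying \begin{equation*} H \circ (12) = (12)(34) \circ H. \end{equation*} Then, for any $\mathcal E$-algebra $A$ and $i \geq 0$, the map $\zeta_i: A \otimes A \to A$ defined by \begin{equation*} \zeta_i(\alpha \otimes \beta) = H(\tilde{x}_i)(\alpha \otimes \alpha \otimes \beta \otimes \beta) \end{equation*} is a Cartan $i$-coboundary, i.e. \begin{equation*} (\partial \zeta_i)(\alpha \otimes \beta) = (\alpha \cup_0 \beta) \cup_i (\alpha \cup_0 \beta) + \sum_{i=j+k} (\alpha \cup_j \alpha) \cup_0 (\beta \cup_k \beta). \end{equation*}
   Context: All constructions are over $\mathbb F_2$. $\mathcal E$ denotes the Barratt-Eccles operad: $\mathcal E(r) = N_*(E(r))$, the normalized chains of the simplicial set $E(r)$ whose $n$-simplices are tuples $(\sigma_0,\dots,\sigma_n)$ of permutations in $\Sigma_r$ (faces delete, degeneracies repeat an entry), with $\Sigma_r$ acting by left multiplication on each entry, and operadic composition $\circ_{\mathcal E} = N_*(\circ_E)\circ EZ^r$, where $\circ_E$ applies composition of permutations coordinatewise and $EZ$ is the Eilenberg-Zilber map. An $\mathcal E$-algebra $A$ is an operad morphism $\mathcal E \to \mathrm{End}(A)$; elements of $\mathcal E$ are identified with their images, and $\partial$ on $\mathrm{Hom}$ complexes is $\partial f = \partial\circ f + f\circ\partial$. Let $\tilde{x}_i = (e, (12), e, \dots,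 (12)^i) \in \mathcal E(2)_i$. The cup-$i$ product on $A$ is $\alpha \cup_i \beta := \tilde{x}_i(\alpha \otimes \beta)$. The chain maps $F, G : \mathcal E(2) \to \mathcal E(4)$ are defined on basis elements by $F(\sigma_0,\dots,\sigma_n) = \circ_{\mathcal E}\big((\sigma_0,\dots,\sigma_n) \otimes \tilde{x}_0 \otimes \tilde{x}_0\big)$ and $G(\sigma_0,\dots,\sigma_n) = \circ_{\mathcal E}\big(\tilde{x}_0 \otimes AW(\sigma_0,\dots,\sigma_n)^{\otimes 2}\big)$, with $AW$ the Alexander-Whitney map applied to the diagonal simplex. *)

From HB Require Import structures.
From mathcomp Require Import all_boot all_order all_algebra all_fingroup.
From mathcomp Require Import finmap monalg.

Set Implicit Arguments.
Unset Strict Implicit.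
Unset Printing Implicit Defensive.

Import GRing.Theory.
Local Open Scope ring_scope.

(* The Barratt-Eccles operad over F_2.                                     *)
(* An n-simplex of E(r) is a sequence (s_0,...,s_n) of permutations in     *)
(* 'S_r (the list has n+1 entries).  It is non-degenerate iff consecutive   *)
(* entries differ.  Normalized chains N_*(E(r)) = free F_2-module on the   *)
(* non-degenerate simplices (all degrees together; the degree of a basis   *)
(* simplex s is (size s).-1).                                              *)

Definition nondeg {r} (s : seq 'S_r) : bool :=
  (s != [::]) && sorted (fun a b : 'S_r => a != b) s.

Definition ndsimp (r : nat) := {s : seq 'S_r | nondeg s}.

Notation chain r := {malg 'F_2[ndsimp r]}.

(* the basis element of a simplex; degenerate simplices are 0 in N_* *)
Definition simp {r} (s : seq 'S_r) : chain r :=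
  if insub s is Some s' then << s' >> else 0.

Definition homog {r} (n : nat) (c : chain r) : Prop :=
  forall s : ndsimp r, s \in msupp c -> size (val s) = n.+1.

Definition linext {r r'} (f : ndsimp r -> chain r') (c : chain r) : chain r' :=
  \sum_(s <- msupp c) c@_s *: f s.

Definition face {T} (i : nat) (s : seq T) : seq T := take i s ++ drop i.+1 s.

(* boundary (over F_2 no signs) *)
Definition bd_simp {r} (s : seq 'S_r) : chain r :=
  \sum_(i < size s) simp (face i s).
Definition bd {r} : chain r -> chain r := linext (fun s => bd_simp (val s)).

(* left action of 'S_r by left multiplication on each entry:            *)
(* sigma . (s_0,...,s_n) = (sigma o s_0, ..., sigma o s_n).              *)
(* (mathcomp's product is (s * t) x = t (s x), so sigma o tau = tau * sigma) *)
Definition act_simp {r} (sigma : 'S_r) (s : seq 'S_r) : chain r :=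
  simp [seq (tau * sigma)%g | tau <- s].
Definition sact {r} (sigma : 'S_r) : chain r -> chain r :=
  linext (fun s => act_simp sigma (val s)).

Definition ar (k : nat) (j : nat -> nat) : nat := sumn [seq j m | m <- iota 0 k].
Definition off (j : nat -> nat) (m : nat) : nat := sumn [seq j l | l <- iota 0 m].

(* gamma_Sigma(sigma; tau_0,...,tau_{k-1}) sends output position q, lying in *)
(* the l-th block (blocks taken in the order sigma 0, sigma 1, ...) at      *)
(* offset p, to off (sigma l) + tau_(sigma l) p.  This is the convention     *)
(* compatible with the action (sigma . f)(a) = f (a o sigma) on End(A) and   *)
(* the composition (f o (g_m))(a) = f (g_m (m-th block of a)).               *)
Definition vcomp_list k (j : nat -> nat) (sigma : 'S_k)
  (tau : forall m : 'I_k, 'S_(j m)) : seq nat :=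
  flatten [seq [seq (off j (sigma l) + tau (sigma l) p)%N | p <- enum 'I_(j (sigma l))]
          | l <- enum 'I_k].

Definition vcomp_f k (j : nat -> nat) (sigma : 'S_k)
  (tau : forall m : 'I_k, 'S_(j m)) (q : 'I_(ar k j)) : 'I_(ar k j) :=
  insubd q (nth 0 (vcomp_list sigma tau) q).

(* vcomp_f is always a bijection; the fallback branch is never used. *)
Definition vcomp k (j : nat -> nat) (sigma : 'S_k)
  (tau : forall m : 'I_k, 'S_(j m)) : 'S_(ar k j) :=
  match boolP (injectiveb (vcomp_f sigma tau)) with
  | AltTrue h => perm (injectiveP _ h)
  | AltFalse _ => 1%g
  end.

(* EZ^{k+1}(s (x) t_0 (x) ... (x) t_{k-1}) is the sum over all shuffles,    *)
(* encoded as words w over the letters 'I_k.+1 (letter ord0 = s, letter     *)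
(* lift ord0 m = t_m), letter c occurring (dim c) times; the u-th vertex    *)
(* takes in each factor the vertex whose index is the number of occurrences *)
(* of its letter among the first u letters of w.  Then o_E is applied        *)
(* vertexwise and degenerate results vanish in normalized chains.           *)
Definition gamma k (j : nat -> nat) (s : seq 'S_k)
  (t : forall m : 'I_k, seq 'S_(j m)) : chain (ar k j) :=
  let sz (c : 'I_k.+1) := if unlift ord0 c is Some m then size (t m) else size s in
  let D := (\sum_(c < k.+1) (sz c).-1)%N in
  if (s == [::]) || [exists m, t m == [::]] then 0 else
  \sum_(w : D.-tuple 'I_k.+1 | [forall c, count_mem c w == (sz c).-1])
    simp [seq vcomp (nth 1%g s (count_mem ord0 (take u w)))
                    (fun m => nth 1%g (t m) (count_mem (lift ord0 m) (take u w)))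
         | u <- iota 0 D.+1].

Definition t12 : 'S_2 := tperm (inord 0) (inord 1).
Definition t23 : 'S_4 := tperm (inord 1) (inord 2).
Definition t12_34 : 'S_4 :=
  (tperm (inord 0) (inord 1) * tperm (inord 2) (inord 3))%g.

Definition xt_seq (i : nat) : seq 'S_2 := [seq if odd u then t12 else 1%g | u <- iota 0 i.+1].
Definition xt (i : nat) : chain 2 := simp (xt_seq i).

Definition two : nat -> nat := fun _ => 2.

(* F(sigma) = o_E (sigma (x) x~_0 (x) x~_0) *)
Definition Fmap : chain 2 -> chain 4 :=
  linext (fun s => @gamma 2 two (val s) (fun _ => [:: 1%g])).

(* G(sigma) = o_E (x~_0 (x) AW(sigma)),                                      *)
(* AW(s_0..s_n) = sum_q (s_0..s_q) (x) (s_q..s_n).                           *)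
Definition Gmap : chain 2 -> chain 4 :=
  linext (fun s => \sum_(q < size (val s))
     @gamma 2 two [:: 1%g] (fun m : 'I_2 => if m == ord0 then take q.+1 (val s)
                                                    else drop q (val s))).

(* E-algebras.  A is a chain complex of F_2-vector spaces (V, dA).        *)
(* End(A)(r) = Hom(A^{(x) r}, A) is represented by r-multilinear maps     *)
(* {ffun 'I_r -> V} -> V.                                                  *)

Definition upd {V : Type} {r} (a : {ffun 'I_r -> V}) (i : 'I_r) (x : V)
  : {ffun 'I_r -> V} := [ffun q => if q == i then x else a q].

Definition at_ {V : zmodType} {r} (a : {ffun 'I_r -> V}) (n : nat) : V :=
  if insub n is Some q then a q else 0.

Definition block {V : zmodType} k (j : nat -> nat) (a : {ffun 'I_(ar k j) -> V})
  (m : 'I_k) : {ffun 'I_(j m) -> V} := [ffun p : 'I_(j m) => at_ a (off j m + p)%N].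

Definition homd {V : zmodType} (d : V -> V) {r} (f : {ffun 'I_r -> V} -> V)
  (a : {ffun 'I_r -> V}) : V :=
  d (f a) + \sum_(i < r) f (upd a i (d (a i))).

Definition thc {V : lmodType 'F_2} (th : forall r, ndsimp r -> {ffun 'I_r -> V} -> V)
  {r} (c : chain r) (a : {ffun 'I_r -> V}) : V :=
  \sum_(s <- msupp c) c@_s *: th r s a.

Lemma nondeg_id r : nondeg [:: (1 : 'S_r)%g].
Proof. by []. Qed.

Definition idsimp (r : nat) : ndsimp r := exist _ [:: 1%g] (nondeg_id r).

(* An E-algebra structure on the chain complex (V, dA): an operad morphism  *)
(* E -> End(A).                                                              *)
Record Ealg (V : lmodType 'F_2) := {
  dA : {linear V -> V};
  dA2 : forall x, dA (dA x) = 0;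
  th : forall r, ndsimp r -> {ffun 'I_r -> V} -> V;
  th_lin : forall r (s : ndsimp r) a i (k : 'F_2) x y,
      th s (upd a i (k *: x + y)) = k *: th s (upd a i x) + th s (upd a i y);
  th_chain : forall r (s : ndsimp r) a, homd dA (th s) a = thc th (bd_simp (val s)) a;
  (* Sigma_r-equivariance, (sigma . f)(a) = f (a o sigma) *)
  th_equiv : forall r (sigma : 'S_r) (s : ndsimp r) a,
      thc th (act_simp sigma (val s)) a = th s [ffun i => a (sigma i)];
  th_comp : forall k (j : nat -> nat) (s : ndsimp k) (t : forall m : 'I_k, ndsimp (j m)) a,
      thc th (@gamma k j (val s) (fun m => val (t m))) a
      = th s [ffun m => th (t m) (block a m)];
  th_unit : forall a, th (idsimp 1) a = a ord0
}.

Definition cup {V : lmodType 'F_2} (A : Ealg V) (i : nat) (x y : V) : V :=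
  thc (th A) (xt i) [ffun q : 'I_2 => if q == ord0 then x else y].

Definition tup4 {V : zmodType} (x y z w : V) : {ffun 'I_4 -> V} :=
  [ffun q : 'I_4 => nth 0 [:: x; y; z; w] q].

(** Over [F_2], applying the algebra structure to the homotopy relation
    [bd H + H bd = (23) F + G] at [x~_i], evaluated on [a (x) a (x) b (x) b],
    gives [d zeta_i = (23)F(x~_i) + G(x~_i) + H(bd x~_i)].  The boundary of
    [x~_i] has the form [c + (12) c], so by equivariance [H(bd x~_i)] is
    [H c + (12)(34) H c]; the two terms agree on the [(12)(34)]-invariant input
    [a (x) a (x) b (x) b] and cancel.  The composition axiom evaluates the other
    two terms: [(23)F(x~_i)] gives [x~_i(x~_0(a, b), x~_0(a, b))], and the
    Alexander-Whitney sum in [G(x~_i)] gives [sum_j x~_0(x~_j(a, a), x~_(i-j)(b, b))],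
    the back face [x~_(i-j)] being translated by [(12)^j], which acts trivially
    on [b (x) b]. *)

From HB Require Import structures.
From mathcomp Require Import all_boot all_order all_algebra all_fingroup.
From mathcomp Require Import finmap monalg.
Set Implicit Arguments.
Unset Strict Implicit.
Unset Printing Implicit Defensive.

Import GRing.Theory.
Local Open Scope ring_scope.

Section LinearExtension.
Variables (R : nzRingType) (K : choiceType) (M : lmodType R) (g : K -> M).

Definition mlinext (c : {malg R[K]}) : M := \sum_(k <- msupp c) c@_k *: g k.

Lemma mlinextEw (d : {fset K}) c :
  (msupp c `<=` d)%fset -> mlinext c = \sum_(k <- d) c@_k *: g k.
Proof.
move=> le_cd; rewrite /mlinext (big_fset_incl _ le_cd) // => k _ /mcoeff_outdom->.
by rewrite scale0r.
Qed.

Lemma mlinext_is_linear : linear mlinext.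
Proof.
move=> a c1 c2; pose d := (msupp c1 `|` msupp c2)%fset.
have le_ad : (msupp (a *: c1 + c2) `<=` d)%fset.
  exact: fsubset_trans (msuppD_le _ _) (fsetSU _ (msuppZ_le _ _)).
rewrite (mlinextEw le_ad) (mlinextEw (fsubsetUl _ (msupp c2))).
rewrite (mlinextEw (fsubsetUr (msupp c1) _)).
rewrite scaler_sumr -big_split; apply: eq_bigr => k _.
by rewrite mcoeffD mcoeffZ scalerDl scalerA.
Qed.

HB.instance Definition _ :=
  GRing.isLinear.Build R {malg R[K]} M *:%R mlinext mlinext_is_linear.

Lemma mlinextU k : mlinext << k >> = g k.
Proof. by rewrite /mlinext msuppU oner_eq0 big_seq_fset1 mcoeffUU scale1r. Qed.

End LinearExtension.

Lemma mlinext_comp (R : nzRingType) (K K' : choiceType) (M : lmodType R)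
    (g : K' -> M) (f : K -> {malg R[K']}) c :
  mlinext g (mlinext f c) = mlinext (mlinext g \o f) c.
Proof.
by rewrite [mlinext f c]/mlinext linear_sum; apply: eq_bigr => k _; rewrite linearZ.
Qed.

Lemma addrr_F2 (M : lmodType 'F_2) (x : M) : x + x = 0.
Proof.
by rewrite -mulr2n -scaler_nat (pcharf0 (pchar_Fp (isT : prime 2))) scale0r.
Qed.

Lemma linextE r r' (f : ndsimp r -> chain r') : linext f =1 mlinext f.
Proof. by []. Qed.

Lemma linextU r r' (f : ndsimp r -> chain r') s : linext f << s >> = f s.
Proof. exact: mlinextU. Qed.

Lemma simp_val r (s : ndsimp r) : simp (val s) = << s >>.
Proof. by rewrite /simp valK. Qed.

Lemma simp_degen r (s : seq 'S_r) : ~~ nondeg s -> simp s = 0.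
Proof. by move=> s_degen; rewrite /simp insubN. Qed.

Lemma nondeg_mapMr r (sigma : 'S_r) s :
  nondeg [seq (tau * sigma)%g | tau <- s] = nondeg s.
Proof.
rewrite /nondeg; case: s => //= x s.
by elim: s x => //= y s IHs x; rewrite IHs (inj_eq (mulIg sigma)).
Qed.

Lemma t12_neq1 : t12 != 1%g.
Proof.
apply/eqP => /permP/(_ (inord 0))/(congr1 val).
by rewrite tpermL perm1 /= !inordK.
Qed.

Lemma expg_t12 u : (t12 ^+ u)%g = if odd u then t12 else 1%g.
Proof.
elim: u => [|u IHu]; first by rewrite expg0.
by rewrite expgSr IHu /=; case: (odd u); rewrite ?tperm2 ?mul1g.
Qed.

Lemma xt_seqE i : xt_seq i = [seq (t12 ^+ u)%g | u <- iota 0 i.+1].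
Proof. by apply: eq_map => u; rewrite expg_t12. Qed.

Lemma sorted_iota_succ (e : rel nat) m n :
  (forall u, e u u.+1) -> sorted e (iota m n).
Proof.
move=> e_succ; case: n => //= n; elim: n m => //= n IHn m.
by rewrite e_succ IHn.
Qed.

Lemma nondeg_xt i : nondeg (xt_seq i).
Proof.
rewrite /nondeg xt_seqE sorted_map; apply/andP; split=> //.
apply: sorted_iota_succ => u /=.
by rewrite expgSr -{1}[(t12 ^+ u)%g]mulg1 (inj_eq (mulgI _)) eq_sym t12_neq1.
Qed.

Definition xt_nd i : ndsimp 2 := exist _ (xt_seq i) (nondeg_xt i).

Lemma xtE i : xt i = << xt_nd i >>.
Proof. by rewrite /xt -simp_val. Qed.

Lemma take_xt q i : (q <= i)%N -> take q.+1 (xt_seq i) = xt_seq q.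
Proof. by move=> le_qi; rewrite /xt_seq -map_take take_iota (minn_idPl _). Qed.

Lemma drop_xt q i : (q <= i)%N ->
  drop q (xt_seq i) = [seq (tau * t12 ^+ q)%g | tau <- xt_seq (i - q)].
Proof.
move=> le_qi; rewrite !xt_seqE -map_drop drop_iota add0n subSn //.
rewrite -[q in iota q]addn0 iotaDl -!map_comp.
by apply: eq_map => u /=; rewrite addnC expgD.
Qed.

Lemma sorted_adjacent (T : Type) (e : rel T) s1 x y s2 :
  sorted e (s1 ++ x :: y :: s2) -> e x y.
Proof. by rewrite sorted_cat_cons /= => /and3P[]. Qed.

Lemma simp_face_xt_inner n k : (k < n)%N -> simp (face k.+1 (xt_seq n.+1)) = 0.
Proof.
move=> lt_kn; apply: simp_degen; rewrite /nondeg negb_and; apply/orP; right.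
rewrite /face -map_take -map_drop take_iota drop_iota (minn_idPl (leqW (leqW lt_kn))).
have -> : iota 0 k.+1 = iota 0 k ++ [:: k] by rewrite -addn1 iotaD.
have -> : iota (0 + k.+2) (n.+2 - k.+2) = k.+2 :: iota k.+3 (n - k.+1).
  by rewrite add0n subSS subSn.
rewrite map_cat -catA /=; apply/negP => sorted_face.
by have := sorted_adjacent sorted_face; rewrite negbK eqxx.
Qed.

Lemma bd_xtS n : bd (xt n.+1) = xt n + sact t12 (xt n).
Proof.
rewrite xtE /bd linextU /bd_simp /= size_map size_iota big_ord_recl big_ord_recr /=.
rewrite big1 ?add0r => [|k _]; last by rewrite /bump /= add1n simp_face_xt_inner.
rewrite addrC /sact xtE linextU /bump /= add1n /face take0 (@drop_xt 1 n.+1) //.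
rewrite drop_oversize ?size_map ?size_iota // cats0 take_xt // subn1 expg1.
by rewrite -simp_val.
Qed.

Lemma bd_xt_sym i : exists c, bd (xt i) = c + sact t12 c.
Proof.
case: i => [|n]; last by exists (xt n); rewrite bd_xtS.
exists 0; rewrite /sact linextE linear0 addr0 xtE /bd linextU /bd_simp big_ord1.
exact: simp_degen.
Qed.

Lemma Gmap_xt i :
  Gmap (xt i) = \sum_(q < i.+1) @gamma 2 two [:: 1%g] (fun m : 'I_2 =>
    if m == ord0 then xt_seq q else [seq (tau * t12 ^+ q)%g | tau <- xt_seq (i - q)]).
Proof.
rewrite /Gmap xtE linextU -[val (xt_nd i)]/(xt_seq i) size_map size_iota.
by apply: eq_bigr => q _; rewrite take_xt -1?ltnS // drop_xt -1?ltnS.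
Qed.

Lemma t23E (q : 'I_4) : val (t23 q) = nth 0%N [:: 0; 2; 1; 3]%N q.
Proof.
by rewrite permE; case: q => [[|[|[|[|?]]]] ?] //=; rewrite -!val_eqE /= !inordK.
Qed.

Lemma t12_34E (q : 'I_4) : val (t12_34 q) = nth 0%N [:: 1; 0; 3; 2]%N q.
Proof.
rewrite permM !permE; case: q => [[|[|[|[|?]]]] ?] //=; rewrite -!val_eqE /= !inordK //=.
all: by rewrite permE /= -!val_eqE /= !inordK.
Qed.

Section Tuples.
Variables (V : zmodType) (x y z w : V).

Lemma tup4_t23 : [ffun q => tup4 x y z w (t23 q)] = tup4 x z y w.
Proof. by apply/ffunP => q; rewrite !ffunE t23E; case: q => [[|[|[|[|?]]]] ?]. Qed.

Lemma tup4_t12_34 : [ffun q => tup4 x y z w (t12_34 q)] = tup4 y x w z.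
Proof. by apply/ffunP => q; rewrite !ffunE t12_34E; case: q => [[|[|[|[|?]]]] ?]. Qed.

Lemma block_tup4E (m p : 'I_2) :
  @block V 2 two (tup4 x y z w) m p = nth 0 [:: x; y; z; w] (2 * m + p).
Proof.
by case: m p => [[|[|?]] ?] [[|[|?]] ?] //; rewrite ffunE /at_ insubT /= ffunE.
Qed.

End Tuples.

Section Evaluation.
Variables (V : lmodType 'F_2) (A : Ealg V).

Lemma thcE r (c : chain r) a : thc (th A) c a = mlinext (fun s => th A s a) c.
Proof. by []. Qed.

Lemma thcU r (s : ndsimp r) a : thc (th A) << s >> a = th A s a.
Proof. exact: mlinextU. Qed.

Lemma thcD r (c1 c2 : chain r) a :
  thc (th A) (c1 + c2) a = thc (th A) c1 a + thc (th A) c2 a.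
Proof. by rewrite !thcE linearD. Qed.

Lemma thc_sum r I (s : seq I) (P : pred I) (F : I -> chain r) a :
  thc (th A) (\sum_(q <- s | P q) F q) a = \sum_(q <- s | P q) thc (th A) (F q) a.
Proof. by rewrite thcE linear_sum. Qed.

Lemma thc_linext r r' (f : ndsimp r -> chain r') c a :
  thc (th A) (linext f c) a = mlinext (fun s => thc (th A) (f s) a) c.
Proof. exact: mlinext_comp. Qed.

Lemma homd_thc r (c : chain r) a :
  homd (dA A) (thc (th A) c) a = thc (th A) (bd c) a.
Proof.
rewrite thc_linext /homd !thcE /mlinext linear_sum /= exchange_big -big_split /=.
apply: eq_bigr => s _; rewrite linearZ -scaler_sumr -scalerDr.
by have := th_chain A s a; rewrite /homd => ->.
Qed.

Lemma thc_act_simp r (sigma : 'S_r) s a :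
  thc (th A) (act_simp sigma s) a = thc (th A) (simp s) [ffun i => a (sigma i)].
Proof.
have [s_nd | s_degen] := boolP (nondeg s).
  by rewrite -[s]/(val (exist _ s s_nd : ndsimp r)) th_equiv simp_val thcU.
by rewrite /act_simp !simp_degen ?nondeg_mapMr // !thcE !linear0.
Qed.

Lemma thc_sact r (sigma : 'S_r) (c : chain r) a :
  thc (th A) (sact sigma c) a = thc (th A) c [ffun i => a (sigma i)].
Proof.
by rewrite thc_linext thcE; apply: eq_bigr => s _; rewrite thc_act_simp simp_val thcU.
Qed.

Lemma thc_gamma k (j : nat -> nat) (s : seq 'S_k) (t : forall m : 'I_k, seq 'S_(j m)) a :
    nondeg s -> (forall m, nondeg (t m)) ->
  thc (th A) (gamma s t) a
  = thc (th A) (simp s) [ffun m => thc (th A) (simp (t m)) (block a m)].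
Proof.
move=> s_nd t_nd; pose t' (m : 'I_k) : ndsimp (j m) := exist _ (t m) (t_nd m).
have := th_comp A (exist _ s s_nd) t' a; rewrite /= => ->.
rewrite -[s]/(val (exist _ s s_nd : ndsimp k)) simp_val thcU; congr (th A _ _).
by apply/ffunP => m; rewrite !ffunE -[t m]/(val (t' m)) simp_val thcU.
Qed.

Lemma thc_xt n b : thc (th A) (xt n) b = cup A n (b ord0) (b ord_max).
Proof.
rewrite /cup; congr thc; apply/ffunP => q; rewrite ffunE.
by case: q => [[|[|?]] lt_q2] //=; apply: congr1; apply: val_inj.
Qed.

Lemma thc_H_bd_xt (H : {linear chain 2 -> chain 4})
    (H_equiv : forall c, H (sact t12 c) = sact t12_34 (H c)) i x y :
  thc (th A) (H (bd (xt i))) (tup4 x x y y) = 0.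
Proof.
have [c ->] := bd_xt_sym i.
by rewrite linearD H_equiv thcD thc_sact tup4_t12_34 addrr_F2.
Qed.

Lemma thc_t23_Fmap_xt i x y :
  thc (th A) (sact t23 (Fmap (xt i))) (tup4 x x y y)
  = cup A i (cup A 0 x y) (cup A 0 x y).
Proof.
rewrite thc_sact tup4_t23 /Fmap xtE linextU (@thc_gamma 2 two) ?nondeg_xt //.
by rewrite -/(xt i) thc_xt !ffunE -/(xt 0) !thc_xt !block_tup4E.
Qed.

Lemma thc_Gmap_xt i x y :
  thc (th A) (Gmap (xt i)) (tup4 x x y y)
  = \sum_(j < i.+1) cup A 0 (cup A j x x) (cup A (i - j) y y).
Proof.
have block_yy : @block V 2 two (tup4 x x y y) ord_max = [ffun _ => y].
  by apply/ffunP => p; rewrite (@block_tup4E V) ffunE; case: p => [[|[|?]] ?].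
rewrite Gmap_xt thc_sum; apply: eq_bigr => q _.
rewrite (@thc_gamma 2 two) // => [|m]; last first.
  by case: ifP; rewrite ?nondeg_mapMr nondeg_xt.
rewrite -/(xt 0) thc_xt !ffunE eqxx [ord_max == _]/= -/(xt q) thc_xt.
rewrite !(@block_tup4E V).
by rewrite thc_act_simp block_yy -/(xt (i - q)) thc_xt !ffunE.
Qed.

End Evaluation.

Theorem mainTheorem2
  (H : {linear chain 2 -> chain 4})
  (H_deg : forall (n : nat) (c : chain 2), homog n c -> homog n.+1 (H c))
  (H_htpy : forall c : chain 2, bd (H c) + H (bd c) = sact t23 (Fmap c) + Gmap c)
  (H_equiv : forall c : chain 2, H (sact t12 c) = sact t12_34 (H c)) :
  forall (V : lmodType 'F_2) (A : Ealg V) (i : nat) (alpha beta : V),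
    homd (dA A) (thc (th A) (H (xt i))) (tup4 alpha alpha beta beta)
    = cup A i (cup A 0 alpha beta) (cup A 0 alpha beta)
      + \sum_(j < i.+1) cup A 0 (cup A j alpha alpha) (cup A (i - j) beta beta).
Proof.
move=> V A i alpha beta; rewrite homd_thc.
have -> : bd (H (xt i)) = sact t23 (Fmap (xt i)) + Gmap (xt i) + H (bd (xt i)).
  by rewrite -H_htpy -addrA addrr_F2 addr0.
by rewrite !thcD thc_H_bd_xt // addr0 thc_t23_Fmap_xt thc_Gmap_xt.
Qed.
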